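(* Let $\{(X_m,d_m,f_m)\}_{m\in\mathbb{N}}$ be a sequence of dynamical systems with each metric $d_m$ bounded by 1, and let $g_m:X_{m+1}\to X_m$ be uniformly continuous bonding maps with $f_m\circ g_m=g_m\circ f_{m+1}$ for all $m$. Suppose the inverse system $(g_m,X_m)$ satisfies the Mittag-Leffler Condition. (i) If every $(X_m,d_m,f_m)$ has the shadowing property, then the inverse limit dynamical system $(\varprojlim(g_m,X_m),d_\Pi,(f_m)^* )$ has the shadowing property. (ii) If every $(X_m,d_m,f_m)$ has the finite shadowing property, then $(\varprojlim(g_m,X_m),d_\Pi,(f_m)^* )$ has the finite shadowing property.
   Context: A dynamical system $(X,d,f)$ is a separable metric space with a continuous self-map. $\varprojlim(g_m,X_m)=\{(x_m)\in\prod_mX_m: x_m=g_m(x_{m+1})\ \forall m\}$ with metric $d_\Pi((x_m),(y_m))=\max_m d_m(x_m,y_m)/(m+1)$, and $(f_m)^*$ is the restriction of the product map $(x_m)\mapsto(f_m(x_m))$. The Mittag-Leffler Condition: for every $N$ there is $k>N$ with $g_N\circ\cdots\circ g_k(X_{k+1})=g_N\circ\cdots\circ g_i(X_{i+1})$ for all $i\ge k$. A $\delta$-pseudo-orbit of $f$ is a (finite or infinite) sequence $(x_n)$ with $d(f(x_n),x_{n+1})<\delta$; $x$ $\varepsilon$-shadows it if $d(f^n(x),x_n)<\varepsilon$ for all indices. Finite shadowing property: for every $\varepsilon>0$ there is $\delta>0$ such that every finite $\delta$-pseudo-orbit is $\varepsilon$-shadowed by some point; shadowing property: same for infinite pseudo-orbits.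 *)

From Stdlib Require Import Reals Lra.
From Coquelicot Require Import Coquelicot.
Open Scope R_scope.

Record MetricSpace := {
  carrier :> Type;
  mdist : carrier -> carrier -> R;
  dist_nonneg : forall x y, 0 <= mdist x y;
  dist_eq0 : forall x y, mdist x y = 0 <-> x = y;
  dist_sym : forall x y, mdist x y = mdist y x;
  dist_tri : forall x y z, mdist x z <= mdist x y + mdist y z
}.
Arguments mdist {m} _ _.

(* Separable: a countable dense subset (enumerated by nat, with gaps allowed
   via option so that the empty space is separable). *)
Definition separable (X : MetricSpace) : Prop :=
  exists s : nat -> option X,
    forall (x : X) (eps : R), 0 < eps ->
      exists n y, s n = Some y /\ mdist x y < eps.

Definition continuous_map {X Y : MetricSpace} (f : X -> Y) : Prop :=
  forall (x : X) (eps : R), 0 < eps -> exists delta, 0 < delta /\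
    forall x' : X, mdist x x' < delta -> mdist (f x) (f x') < eps.

Definition uniformly_continuous_map {X Y : MetricSpace} (f : X -> Y) : Prop :=
  forall eps : R, 0 < eps -> exists delta, 0 < delta /\
    forall x x' : X, mdist x x' < delta -> mdist (f x) (f x') < eps.

Definition dynamical_system (X : MetricSpace) (f : X -> X) : Prop :=
  separable X /\ continuous_map f.

(* Shadowing notions for a map F : T -> T restricted to an (F-invariant)
   subset P of T, with distance d.  For a whole space take P := fun _ => True. *)

Definition finite_pseudo_orbit {T : Type} (P : T -> Prop) (d : T -> T -> R)
  (F : T -> T) (delta : R) (x : nat -> T) (n : nat) : Prop :=
  (forall i, (i <= n)%nat -> P (x i)) /\
  (forall i, (i < n)%nat -> d (F (x i)) (x (S i)) < delta).

Definition pseudo_orbit {T : Type} (P : T -> Prop) (d : T -> T -> R)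
  (F : T -> T) (delta : R) (x : nat -> T) : Prop :=
  (forall i, P (x i)) /\ (forall i, d (F (x i)) (x (S i)) < delta).

Definition finite_shadowing_on {T : Type} (P : T -> Prop) (d : T -> T -> R)
  (F : T -> T) : Prop :=
  forall eps, 0 < eps -> exists delta, 0 < delta /\
    forall (x : nat -> T) (n : nat), finite_pseudo_orbit P d F delta x n ->
      exists z, P z /\ forall i, (i <= n)%nat -> d (Nat.iter i F z) (x i) < eps.

Definition shadowing_on {T : Type} (P : T -> Prop) (d : T -> T -> R)
  (F : T -> T) : Prop :=
  forall eps, 0 < eps -> exists delta, 0 < delta /\
    forall x : nat -> T, pseudo_orbit P d F delta x ->
      exists z, P z /\ forall i, d (Nat.iter i F z) (x i) < eps.

Definition shadowing (X : MetricSpace) (f : X -> X) : Prop :=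
  shadowing_on (fun _ => True) (@mdist X) f.

Definition finite_shadowing (X : MetricSpace) (f : X -> X) : Prop :=
  finite_shadowing_on (fun _ => True) (@mdist X) f.

Section InverseLimit.
Variable X : nat -> MetricSpace.
Variable g : forall m, X (S m) -> X m.

Definition inv_lim (x : forall m, X m) : Prop :=
  forall m, x m = g m (x (S m)).

(* d_Pi(x,y) = max_m d_m(x_m,y_m)/(m+1), written as the supremum
   (which is attained when the d_m are bounded). *)
Definition d_Pi (x y : forall m, X m) : R :=
  real (Lub_Rbar (fun r => exists m : nat, r = mdist (x m) (y m) / INR (S m))).

Definition prod_map (f : forall m, X m -> X m) (x : forall m, X m) :
  forall m, X m := fun m => f m (x m).

(* img j N y  <->  y \in g_N o ... o g_{N+j-1} (X_{N+j})   (img 0 N = X_N) *)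
Fixpoint img (j : nat) : forall N, X N -> Prop :=
  match j with
  | O => fun _ _ => True
  | S j' => fun N y => exists x : X (S N), img j' (S N) x /\ g N x = y
  end.

Definition mittag_leffler : Prop :=
  forall N, exists k, (N < k)%nat /\ forall i, (k <= i)%nat ->
    forall y : X N, img (S k - N) N y <-> img (S i - N) N y.

End InverseLimit.

(* Since every d_m is at most 1, coordinates m >= N contribute at
   most 1/(m+1) < eps/2 to d_Pi for a suitable N, so only the coordinates
   m <= N matter.  By Mittag-Leffler, some finite-depth image
   g_N o ... o g_(L-1) (X_L) is already the stable image at level N, and
   stable points lift to threads of the inverse limit.  Now a pseudo-orbit of
   the inverse limit with small d_Pi-steps is, at coordinate L, a pseudo-orbit
   of f_L; a point of X_L shadowing it is pushed down to level N (uniform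
   continuity of the bonding maps and f_m o g_m = g_m o f_(m+1) keep its orbit
   close), lands in the stable image, and so is the N-th coordinate of a
   thread z.  Uniform continuity again makes the coordinates m <= N of the
   orbit of z close, hence z eps-shadows the pseudo-orbit.  The same argument
   works verbatim for finite pseudo-orbits. *)

From Stdlib Require Import Reals Lra Psatz Arith Lia ClassicalEpsilon Eqdep_dec.
From Coquelicot Require Import Coquelicot.
Open Scope R_scope.

Lemma INR_S_ge1 (m : nat) : 1 <= INR (S m).
Proof. rewrite S_INR. pose proof (pos_INR m). lra. Qed.

Lemma Rdiv_INR_S_le (d : R) (m : nat) : 0 <= d -> d / INR (S m) <= d.
Proof.
  intros Hd. pose proof (INR_S_ge1 m).
  unfold Rdiv. rewrite <- (Rmult_1_r d) at 2.
  apply Rmult_le_compat_l; [exact Hd |].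
  rewrite <- Rinv_1. apply Rinv_le_contravar; lra.
Qed.

Lemma Rdiv_le_of_inv_lt (d e n : R) : d <= 1 -> 0 < e -> / e < n -> d / n <= e.
Proof.
  intros Hd He Hn.
  pose proof (Rinv_0_lt_compat e He) as He'.
  assert (Hn0 : 0 < n) by lra.
  assert (Hinv : / n < e).
  { rewrite <- (Rinv_inv e). apply Rinv_lt_contravar; [nra | exact Hn]. }
  unfold Rdiv. pose proof (Rinv_0_lt_compat n Hn0). nra.
Qed.

Section InverseLimit.

Variable X : nat -> MetricSpace.
Variable g : forall m, X (S m) -> X m.

Lemma img_succ (j N : nat) (y : X N) : img X g (S j) N y -> img X g j N y.
Proof.
  revert N y; induction j as [| j IH]; intros N y Hy; [exact Logic.I |].
  destruct Hy as [x [Hx Hgx]]. exists x. split; [apply IH |]; assumption.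
Qed.

Lemma img_antitone (j k N : nat) (y : X N) :
  (j <= k)%nat -> img X g k N y -> img X g j N y.
Proof. induction 1; auto using img_succ. Qed.

Definition in_stable_image (N : nat) (y : X N) : Prop := forall j, img X g j N y.

Lemma stable_image_g (n : nat) (x : X (S n)) :
  in_stable_image (S n) x -> in_stable_image n (g n x).
Proof. intros Hx [| j]; [exact Logic.I | exists x; auto]. Qed.

Hypothesis HML : mittag_leffler X g.

Lemma mittag_leffler_depth (N : nat) :
  exists j, forall y : X N, img X g j N y -> in_stable_image N y.
Proof.
  destruct (HML N) as [k [HNk Hk]].
  exists (S k - N)%nat. intros y Hy j.
  destruct (le_lt_dec j (S k - N)) as [Hj | Hj].
  - exact (img_antitone _ _ _ _ Hj Hy).
  - apply (Hk (j + N - 1)%nat ltac:(lia)) in Hy.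
    replace (S (j + N - 1) - N)%nat with j in Hy by lia. exact Hy.
Qed.

Lemma stable_image_lift (N : nat) (y : X N) :
  in_stable_image N y -> exists x, in_stable_image (S N) x /\ g N x = y.
Proof.
  intros Hy. destruct (mittag_leffler_depth (S N)) as [j Hj].
  destruct (Hy (S j)) as [x [Hx Hgx]].
  exists x. split; [apply Hj |]; assumption.
Qed.

Lemma thread_of_lifts (P : forall n, X n -> Prop) :
  (forall n x, P n x -> exists x', P (S n) x' /\ g n x' = x) ->
  forall x0 : X 0, P 0%nat x0 -> exists z, inv_lim X g z /\ forall n, P n (z n).
Proof.
  intros lift x0 H0.
  pose (next := fun n (p : {x : X n | P n x}) =>
    constructive_indefinite_description _ (lift n (proj1_sig p) (proj2_sig p))).
  pose (c := nat_rect (fun n => {x : X n | P n x}) (exist _ x0 H0)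
    (fun n p => exist _ (proj1_sig (next n p)) (proj1 (proj2_sig (next n p))))).
  exists (fun n => proj1_sig (c n)). split.
  - intro m. symmetry. exact (proj2 (proj2_sig (next m (c m)))).
  - intro n. exact (proj2_sig (c n)).
Qed.

(* [descendant N y n x]: x = g_n o ... o g_(N-1) (y).  An inductive relation
   avoids casts between X (k + n) and X N that a composite map would need. *)
Inductive descendant (N : nat) (y : X N) : forall n, X n -> Prop :=
  | descendant_refl : descendant N y N y
  | descendant_g n x : descendant N y (S n) x -> descendant N y n (g n x).

Lemma descendant_bottom (N : nat) (y : X N) : exists x0 : X 0, descendant N y 0 x0.
Proof.
  assert (Hdown : forall d n, (n + d = N)%nat -> exists x : X n, descendant N y n x).
  { induction d as [| d IH]; intros n Hn.
    - rewrite Nat.add_0_r in Hn. subst n. exists y. constructor.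
    - destruct (IH (S n) ltac:(lia)) as [x Hx]. exists (g n x). constructor. exact Hx. }
  exact (Hdown N 0%nat eq_refl).
Qed.

Lemma descendant_stable (N : nat) (y : X N) (n : nat) (x : X n) :
  in_stable_image N y -> descendant N y n x -> in_stable_image n x.
Proof. intros Hy Hx. induction Hx; auto using stable_image_g. Qed.

Lemma descendant_lift (N : nat) (y : X N) (n : nat) (x : X n) :
  descendant N y n x -> (n < N)%nat -> exists x', descendant N y (S n) x' /\ g n x' = x.
Proof. intros [| n' x' Hx'] Hlt; [lia | eauto]. Qed.

Lemma descendant_top (N : nat) (y x : X N) : descendant N y N x -> x = y.
Proof.
  assert (Hgen : forall n (x : X n), descendant N y n x ->
            (n < N)%nat \/ existT (fun m => carrier (X m)) n x = existT _ N y).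
  { induction 1 as [| n x' _ [Hlt | Heq]]; [now right | left; lia |].
    left. apply (f_equal (@projT1 _ _)) in Heq. simpl in Heq. lia. }
  intros Hx. destruct (Hgen N x Hx) as [Hlt | Heq]; [lia |].
  exact (inj_pair2_eq_dec nat Nat.eq_dec _ N x y Heq).
Qed.

Lemma stable_image_thread (N : nat) (y : X N) :
  in_stable_image N y -> exists z, inv_lim X g z /\ z N = y.
Proof.
  intros Hy. destruct (descendant_bottom N y) as [x0 Hx0].
  destruct (thread_of_lifts
              (fun n x => descendant N y n x \/ (N < n)%nat /\ in_stable_image n x))
    with x0 as [z [Hz HzP]].
  - intros n x [Hx | [HNn Hx]].
    + destruct (le_lt_dec N n) as [HNn | HnN].
      * destruct (stable_image_lift n x (descendant_stable N y n x Hy Hx))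
          as [x' [Hx' Hgx']].
        exists x'. split; [right; split; [lia |] |]; assumption.
      * destruct (descendant_lift N y n x Hx HnN) as [x' [Hx' Hgx']].
        exists x'. split; [left |]; assumption.
    + destruct (stable_image_lift n x Hx) as [x' [Hx' Hgx']].
      exists x'. split; [right; split; [lia |] |]; assumption.
  - left. exact Hx0.
  - exists z. split; [exact Hz |].
    destruct (HzP N) as [HzN | [HNN _]]; [exact (descendant_top N y (z N) HzN) | lia].
Qed.

End InverseLimit.

Section Dynamics.

Variable X : nat -> MetricSpace.
Variable f : forall m, X m -> X m.
Variable g : forall m, X (S m) -> X m.
Hypothesis Hcomm : forall m (x : X (S m)), f m (g m x) = g m (f (S m) x).

Lemma iter_g_commute (i m : nat) (x : X (S m)) :
  Nat.iter i (f m) (g m x) = g m (Nat.iter i (f (S m)) x).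
Proof. induction i as [| i IH]; simpl; [reflexivity | rewrite IH; apply Hcomm]. Qed.

Lemma iter_prod_map (i : nat) (z : forall m, X m) (m : nat) :
  Nat.iter i (prod_map X f) z m = Nat.iter i (f m) (z m).
Proof.
  induction i as [| i IH]; simpl; [reflexivity |].
  unfold prod_map at 1. rewrite IH. reflexivity.
Qed.

Lemma inv_lim_iter (i : nat) (z : forall m, X m) :
  inv_lim X g z -> inv_lim X g (Nat.iter i (prod_map X f) z).
Proof. intros Hz m. rewrite !iter_prod_map, (Hz m). apply iter_g_commute. Qed.

Hypothesis Hunif : forall m, uniformly_continuous_map (g m).

Lemma inv_lim_close_below (N : nat) (eps : R) : 0 < eps -> exists delta, 0 < delta /\
  forall p q : forall m, X m, inv_lim X g p -> inv_lim X g q ->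
    mdist (p N) (q N) < delta -> forall m, (m <= N)%nat -> mdist (p m) (q m) < eps.
Proof.
  revert eps; induction N as [| N IH]; intros eps Heps.
  - exists eps. split; [exact Heps |]. intros p q _ _ Hpq m Hm.
    replace m with 0%nat by lia. exact Hpq.
  - destruct (IH eps Heps) as [d1 [Hd1 Hbelow]].
    destruct (Hunif N d1 Hd1) as [d2 [Hd2 Hg]].
    exists (Rmin eps d2). split; [apply Rmin_pos; assumption |].
    intros p q Hp Hq Hpq m Hm.
    destruct (Nat.eq_dec m (S N)) as [-> | Hne].
    + eapply Rlt_le_trans; [exact Hpq | apply Rmin_l].
    + apply (Hbelow p q Hp Hq); [| lia].
      rewrite (Hp N), (Hq N). apply Hg.
      eapply Rlt_le_trans; [exact Hpq | apply Rmin_r].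
Qed.

Lemma orbit_close_descend (j N : nat) (eps : R) : 0 < eps -> exists delta, 0 < delta /\
  forall (T : nat -> Prop) (xs : nat -> forall m, X m),
    (forall i, T i -> inv_lim X g (xs i)) ->
    forall L (w : X L), L = (j + N)%nat ->
    (forall i, T i -> mdist (Nat.iter i (f L) w) (xs i L) < delta) ->
    exists y : X N, img X g j N y /\
      forall i, T i -> mdist (Nat.iter i (f N) y) (xs i N) < eps.
Proof.
  revert N eps; induction j as [| j IH]; intros N eps Heps.
  - exists eps. split; [exact Heps |]. intros T xs _ L w -> Hw.
    exists w. split; [exact Logic.I | exact Hw].
  - destruct (Hunif N eps Heps) as [d1 [Hd1 Hg]].
    destruct (IH (S N) d1 Hd1) as [delta [Hdelta Hdesc]].
    exists delta. split; [exact Hdelta |]. intros T xs Hxs L w HL Hw.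
    destruct (Hdesc T xs Hxs L w ltac:(lia) Hw) as [y [Hy Hyclose]].
    exists (g N y). split; [exists y; split; auto |].
    intros i Hi. rewrite iter_g_commute, (Hxs i Hi N). apply Hg, Hyclose, Hi.
Qed.

Hypothesis Hbound : forall m (x y : X m), mdist x y <= 1.

Lemma d_Pi_ge (x y : forall m, X m) (m : nat) :
  mdist (x m) (y m) / INR (S m) <= d_Pi X x y.
Proof.
  unfold d_Pi.
  set (E := fun r => exists m : nat, r = mdist (x m) (y m) / INR (S m)).
  destruct (Lub_Rbar_correct E) as [Hub Hlub].
  destruct (Lub_Rbar E) as [r | |]; simpl.
  - exact (Hub _ (ex_intro _ m eq_refl)).
  - exfalso. apply (Hlub (Finite 1)). intros r [n ->]. simpl.
    eapply Rle_trans; [apply Rdiv_INR_S_le, dist_nonneg | apply Hbound].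
  - destruct (Hub _ (ex_intro _ m eq_refl)).
Qed.

Lemma d_Pi_le (x y : forall m, X m) (c : R) :
  (forall m, mdist (x m) (y m) / INR (S m) <= c) -> d_Pi X x y <= c.
Proof.
  intros Hc. unfold d_Pi.
  set (E := fun r => exists m : nat, r = mdist (x m) (y m) / INR (S m)).
  destruct (Lub_Rbar_correct E) as [Hub Hlub].
  assert (Hub_c : is_ub_Rbar E c) by (intros r [n ->]; apply Hc).
  specialize (Hlub c Hub_c).
  destruct (Lub_Rbar E) as [r | |]; simpl in *; [exact Hlub | contradiction |].
  destruct (Hub _ (ex_intro _ 0%nat eq_refl)).
Qed.

Lemma d_Pi_coordinate_lt (x y : forall m, X m) (L : nat) (delta : R) :
  d_Pi X x y < delta / INR (S L) -> mdist (x L) (y L) < delta.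
Proof.
  intros Hxy. pose proof (d_Pi_ge x y L) as HL.
  pose proof (INR_S_ge1 L).
  apply (Rmult_lt_reg_r (/ INR (S L))); [apply Rinv_0_lt_compat; lra |].
  exact (Rle_lt_trans _ _ _ HL Hxy).
Qed.

Hypothesis HML : mittag_leffler X g.

Lemma level_shadow_lifts (eps : R) : 0 < eps -> exists L theta, 0 < theta /\
  forall (T : nat -> Prop) (xs : nat -> forall m, X m),
    (forall i, T i -> inv_lim X g (xs i)) ->
    forall w : X L, (forall i, T i -> mdist (Nat.iter i (f L) w) (xs i L) < theta) ->
    exists z, inv_lim X g z /\
      forall i, T i -> d_Pi X (Nat.iter i (prod_map X f) z) (xs i) < eps.
Proof.
  intros Heps.
  destruct (INR_unbounded (/ (eps / 2))) as [N HN].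
  destruct (inv_lim_close_below N (eps / 2) ltac:(lra)) as [dc [Hdc Hclose]].
  destruct (mittag_leffler_depth X g HML N) as [j Hj].
  destruct (orbit_close_descend j N dc Hdc) as [theta [Htheta Hdesc]].
  exists (j + N)%nat, theta. split; [exact Htheta |].
  intros T xs Hxs w Hw.
  destruct (Hdesc T xs Hxs _ w eq_refl Hw) as [y [Hy Hyclose]].
  destruct (stable_image_thread X g HML N y (Hj y Hy)) as [z [Hz HzN]].
  exists z. split; [exact Hz |]. intros i Hi.
  apply Rle_lt_trans with (eps / 2); [| lra].
  apply d_Pi_le. intro m.
  set (d := mdist (Nat.iter i (prod_map X f) z m) (xs i m)).
  destruct (le_lt_dec m N) as [HmN | HNm].
  - apply Rle_trans with d; [apply Rdiv_INR_S_le, dist_nonneg |].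
    left. apply (Hclose _ (xs i) (inv_lim_iter i z Hz) (Hxs i Hi)); [| exact HmN].
    rewrite iter_prod_map, HzN. exact (Hyclose i Hi).
  - apply Rdiv_le_of_inv_lt; [apply Hbound | lra |].
    apply Rlt_le_trans with (INR N); [exact HN | apply le_INR; lia].
Qed.

End Dynamics.

Theorem theorem4p7
  (X : nat -> MetricSpace)
  (f : forall m, X m -> X m)
  (g : forall m, X (S m) -> X m)
  (Hdyn : forall m, dynamical_system (X m) (f m))
  (Hbound : forall m (x y : X m), mdist x y <= 1)
  (Hunif : forall m, uniformly_continuous_map (g m))
  (Hcomm : forall m (x : X (S m)), f m (g m x) = g m (f (S m) x))
  (HML : mittag_leffler X g) :
  ((forall m, shadowing (X m) (f m)) ->
     shadowing_on (inv_lim X g) (d_Pi X) (prod_map X f)) /\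
  ((forall m, finite_shadowing (X m) (f m)) ->
     finite_shadowing_on (inv_lim X g) (d_Pi X) (prod_map X f)).
Proof.
  split; intros Hsh eps Heps;
    destruct (level_shadow_lifts X f g Hcomm Hunif Hbound HML eps Heps)
      as [L [theta [Htheta Hlift]]];
    destruct (Hsh L theta Htheta) as [dL [HdL HshL]];
    exists (dL / INR (S L));
    (split; [apply Rdiv_lt_0_compat; [exact HdL | apply lt_0_INR; lia] |]).
  - intros xs [Hxs Hstep].
    destruct (HshL (fun i => xs i L)) as [w [_ Hw]].
    { split; [trivial | intro i; exact (d_Pi_coordinate_lt X Hbound _ _ _ _ (Hstep i))]. }
    destruct (Hlift (fun _ => True) xs (fun i _ => Hxs i) w (fun i _ => Hw i))
      as [z [Hz Hzclose]].
    exists z. split; [exact Hz | intro i; exact (Hzclose i Logic.I)].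
  - intros xs n [Hxs Hstep].
    destruct (HshL (fun i => xs i L) n) as [w [_ Hw]].
    { split; [trivial | intros i Hi; exact (d_Pi_coordinate_lt X Hbound _ _ _ _ (Hstep i Hi))]. }
    exact (Hlift (fun i => (i <= n)%nat) xs Hxs w Hw).
Qed.
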